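(* Let $m,n\in\mathbb N$ with $m\ge n\ge 1$, and let $\beta>1$ be the real zero of $x^3-mx^2-mx-n$ that exceeds $1$. Then $\mathrm{Fin}(-\beta)$ is a ring if and only if $n=m$. (Equivalently, $\mathrm{Fin}(-\beta)=\mathbb Z[\beta]$ if and only if $n=m$.)
   Context: Fix a real number $\beta>1$ and set $\ell=\frac{-\beta}{\beta+1}$. Define $T_{-\beta}:[\ell,\ell+1)\to[\ell,\ell+1)$ by $T_{-\beta}(x)=-\beta x-\lfloor -\beta x-\ell\rfloor$. For $x\in[\ell,\ell+1)$, the $(-\beta)$-expansion of $x$ is $d_{-\beta}(x)=x_1x_2\cdots$ with $x_i=\lfloor -\beta\, T_{-\beta}^{i-1}(x)-\ell\rfloor\in\{0,\dots,\lfloor\beta\rfloor\}$. For arbitrary $x\in\mathbb R$, let $k\ge0$ be minimal with $x/(-\beta)^k\in(\ell,\ell+1)$ and let $d_{-\beta}(x/(-\beta)^k)=x_1x_2\cdots$. The $(-\beta)$-expansion of $x$ is $x_1\cdots x_k\bullet x_{k+1}x_{k+2}\cdots$ if $k\ge1$, and $0\bullet x_1x_2\cdots$ if $k=0$. It represents $x=\sum_i x_i'(-\beta)^i$ in the usual positional way. $\mathbb Z_{-\beta}$ is the set of reals whose $(-\beta)$-expansion has only zeros after $\bullet$. $\mathrm{Fin}(-\beta)=\bigcup_{i\ge0}(-\beta)^{-i}\mathbb Z_{-\beta}$ is the set of reals whose $(-\beta)$-expansion has only finitely many nonzero digits. The question is whether this set is closed under addition, negation and multiplication, i.e. whether it is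 a subring of $\mathbb R$. *)

From Stdlib Require Import Reals Lra Lia ZArith.
Open Scope R_scope.

(* floor function: Int_part r = up r - 1 is the floor of r *)
Definition floorR (r : R) : Z := Int_part r.

Definition nb_ell (beta : R) : R := - beta / (beta + 1).

Definition nb_T (beta x : R) : R :=
  - beta * x - IZR (floorR (- beta * x - nb_ell beta)).

(* digit x_{i+1} of d_{-beta}(x) (0-indexed):
   x_{i+1} = floor(-beta * T^i(x) - ell) *)
Definition nb_digit (beta x : R) (i : nat) : Z :=
  floorR (- beta * Nat.iter i (nb_T beta) x - nb_ell beta).

Definition nb_in_interval (beta y : R) : Prop :=
  nb_ell beta < y < nb_ell beta + 1.

Definition in_Fin (beta x : R) : Prop :=
  exists k : nat,
    nb_in_interval beta (x / (- beta) ^ k) /\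
    (forall j : nat, (j < k)%nat -> ~ nb_in_interval beta (x / (- beta) ^ j)) /\
    exists N : nat, forall i : nat, (N <= i)%nat ->
      nb_digit beta (x / (- beta) ^ k) i = 0%Z.

Definition Fin_is_ring (beta : R) : Prop :=
  (forall x y, in_Fin beta x -> in_Fin beta y -> in_Fin beta (x + y)) /\
  (forall x, in_Fin beta x -> in_Fin beta (- x)) /\
  (forall x y, in_Fin beta x -> in_Fin beta y -> in_Fin beta (x * y)).

From Stdlib Require Import Reals Lra Lia ZArith Classical Wf_nat.
Open Scope R_scope.

(* If n < m, then 1 = 1• lies in Fin(-β) while the expansion of -1 is
   1 m 1 • (n+1)(n+1)..., so Fin(-β) is not closed under negation.
   If n = m, then Fin(-β) = Z[β, 1/β]. Finite expansions are Laurent polynomials in β.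
   Conversely T_{-β} maps Z[β] ∩ [ℓ, ℓ+1) into itself and, in the coordinates
   (d, -c - m d) of a + cβ + dβ², acts as a shift (x, y) ↦ (y, z) whose new entry z is
   pinned down by the window [ℓ, ℓ+1). The hexagonal norm max(|x|, |y|, |y - x|),
   refined by the position on the boundary of the hexagon, strictly decreases along
   every nonzero orbit, so every orbit reaches 0 and the expansion is finite. *)

Ltac push_IZR :=
  repeat first [rewrite plus_IZR | rewrite minus_IZR | rewrite opp_IZR | rewrite mult_IZR].

Lemma floorR_spec (r : R) : IZR (floorR r) <= r < IZR (floorR r) + 1.
Proof. unfold floorR. destruct (base_Int_part r). lra. Qed.

Lemma floorR_unique (r : R) (z : Z) : IZR z <= r < IZR z + 1 -> floorR r = z.
Proof.
  intros [H1 H2]. destruct (floorR_spec r) as [H3 H4].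
  rewrite <- plus_IZR in *.
  assert (Hlt1 : IZR z < IZR (floorR r + 1)) by lra.
  assert (Hlt2 : IZR (floorR r) < IZR (z + 1)) by lra.
  apply lt_IZR in Hlt1, Hlt2. lia.
Qed.

Lemma Zle_of_IZR_lt_succ (p q : Z) : IZR p < IZR q + 1 -> (p <= q)%Z.
Proof. intros H. rewrite <- plus_IZR in H. apply lt_IZR in H. lia. Qed.

Lemma exists_least_nat (P : nat -> Prop) :
  (exists k, P k) -> exists k, P k /\ forall j, (j < k)%nat -> ~ P j.
Proof.
  intros HP.
  destruct (dec_inh_nat_subset_has_unique_least_element P (fun n => classic (P n)) HP)
    as (k & [Pk Hleast] & _).
  exists k. split; [exact Pk|]. intros j Hj Pj. specialize (Hleast j Pj). lia.
Qed.

(** * The transformation [nb_T] *)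

Section NegBetaTransformation.

Variable b : R.
Hypothesis b_gt_1 : 1 < b.

Lemma nb_ell_eq : nb_ell b = / (b + 1) - 1.
Proof. unfold nb_ell. field. lra. Qed.

Lemma inv_succ_bounds : 0 < / (b + 1) < 1 / 2 /\ / (b + 1) * (b + 1) = 1.
Proof.
  split; [split|field; lra].
  - apply Rinv_0_lt_compat. lra.
  - apply (Rmult_lt_reg_r (b + 1)); [lra|]. rewrite Rinv_l by lra. lra.
Qed.

Lemma nb_T_range x : nb_ell b <= nb_T b x < nb_ell b + 1.
Proof. unfold nb_T. pose proof (floorR_spec (- b * x - nb_ell b)). lra. Qed.

Lemma nb_T_eq x d : IZR d <= - b * x - nb_ell b < IZR d + 1 -> nb_T b x = - b * x - IZR d.
Proof. intros H. unfold nb_T. rewrite (floorR_unique _ d H). reflexivity. Qed.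

Lemma IZR_in_window_eq_0 (a : Z) : nb_ell b <= IZR a < nb_ell b + 1 -> a = 0%Z.
Proof.
  intros Ha. rewrite nb_ell_eq in Ha. pose proof inv_succ_bounds.
  assert (a < 1)%Z by (apply lt_IZR; lra).
  assert (-1 < a)%Z by (apply lt_IZR; lra).
  lia.
Qed.

Lemma nb_T_0 : nb_T b 0 = 0.
Proof.
  pose proof inv_succ_bounds. rewrite (nb_T_eq 0 0); [ring|].
  rewrite nb_ell_eq. lra.
Qed.

Lemma iter_nb_T_0 i : Nat.iter i (nb_T b) 0 = 0.
Proof. induction i as [|i IH]; simpl; [|rewrite IH, nb_T_0]; reflexivity. Qed.

Lemma nb_digit_0 x i : Nat.iter i (nb_T b) x = 0 -> nb_digit b x i = 0%Z.
Proof.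
  intros H. unfold nb_digit. rewrite H. apply floorR_unique.
  pose proof inv_succ_bounds. rewrite nb_ell_eq. lra.
Qed.

(* [-e/(b+1)] is the fixed point of [nb_T] whose digit is [e]. *)
Lemma nb_floor_fixed (e : Z) : 0 <= IZR e <= b ->
  floorR (- b * (- IZR e / (b + 1)) - nb_ell b) = e.
Proof.
  intros He. apply floorR_unique. rewrite nb_ell_eq.
  destruct inv_succ_bounds as [[Hv0 _] Hv].
  replace (- b * (- IZR e / (b + 1)) - (/ (b + 1) - 1))
    with (IZR e + (b - IZR e) * / (b + 1)) by (field; lra).
  assert (0 <= (b - IZR e) * / (b + 1)) by (apply Rmult_le_pos; lra).
  assert ((b - IZR e) * / (b + 1) < 1) by nra.
  lra.
Qed.

Lemma nb_T_fixed (e : Z) : 0 <= IZR e <= b -> nb_T b (- IZR e / (b + 1)) = - IZR e / (b + 1).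
Proof. intros He. unfold nb_T. rewrite nb_floor_fixed by exact He. field. lra. Qed.

Lemma iter_nb_T_fixed (e : Z) i : 0 <= IZR e <= b ->
  Nat.iter i (nb_T b) (- IZR e / (b + 1)) = - IZR e / (b + 1).
Proof.
  intros He. induction i as [|i IH]; [reflexivity|].
  rewrite Nat.iter_succ, IH. apply nb_T_fixed, He.
Qed.

Lemma in_Fin_intro x k N :
  nb_in_interval b (x / (- b) ^ k) ->
  (forall j, (j < k)%nat -> ~ nb_in_interval b (x / (- b) ^ j)) ->
  Nat.iter N (nb_T b) (x / (- b) ^ k) = 0 -> in_Fin b x.
Proof.
  intros Hk Hleast HN. exists k. split; [exact Hk|]. split; [exact Hleast|].
  exists N. intros i Hi. apply nb_digit_0.
  replace i with ((i - N) + N)%nat by lia. rewrite Nat.iter_add, HN. apply iter_nb_T_0.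
Qed.

Lemma exists_nb_in_interval_div_pow x : exists k, nb_in_interval b (x / (- b) ^ k).
Proof.
  destruct inv_succ_bounds as [[Hv0 Hv2] Hv].
  destruct (Pow_x_infinity (- b) ltac:(rewrite Rabs_left; lra) ((Rabs x + 1) * (b + 1)))
    as [k Hk].
  specialize (Hk k (Nat.le_refl k)). exists k.
  set (p := (- b) ^ k) in *.
  assert (Hxb : 0 < (Rabs x + 1) * (b + 1))
    by (pose proof (Rabs_pos x); apply Rmult_lt_0_compat; lra).
  assert (Hp : 0 < Rabs p) by lra.
  assert (Rabs (x / p) < / (b + 1)).
  { unfold Rdiv. rewrite Rabs_mult, Rabs_inv. apply (Rmult_lt_reg_r (Rabs p)); [exact Hp|].
    rewrite Rmult_assoc, Rinv_l by lra.
    assert (/ (b + 1) * Rabs p >= / (b + 1) * ((Rabs x + 1) * (b + 1)))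
      by (apply Rmult_ge_compat_l; lra).
    replace (/ (b + 1) * ((Rabs x + 1) * (b + 1))) with (Rabs x + 1) in H by (field; lra).
    lra. }
  unfold nb_in_interval. rewrite nb_ell_eq. apply Rabs_def2 in H. lra.
Qed.

Lemma in_Fin_of_orbits_0 x :
  (forall k, nb_in_interval b (x / (- b) ^ k) ->
     exists N, Nat.iter N (nb_T b) (x / (- b) ^ k) = 0) -> in_Fin b x.
Proof.
  intros Horb.
  destruct (exists_least_nat _ (exists_nb_in_interval_div_pow x)) as [k [Hk Hleast]].
  destruct (Horb k Hk) as [N HN]. exact (in_Fin_intro x k N Hk Hleast HN).
Qed.

Lemma iter_nb_T_bounded y i : nb_in_interval b y -> -1 <= Nat.iter i (nb_T b) y <= 1.
Proof.
  intros Hy. pose proof inv_succ_bounds. unfold nb_in_interval in Hy.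
  rewrite nb_ell_eq in Hy. destruct i as [|i]; simpl; [lra|].
  pose proof (nb_T_range (Nat.iter i (nb_T b) y)). rewrite nb_ell_eq in H0. lra.
Qed.

(* Once the digits vanish, [nb_T] is multiplication by [-b]; boundedness forces the value 0. *)
Lemma in_Fin_orbit_0 x :
  in_Fin b x -> exists k N, Nat.iter N (nb_T b) (x / (- b) ^ k) = 0.
Proof.
  intros (k & Hk & _ & N & HN). exists k, N.
  set (y := x / (- b) ^ k) in *. set (t := Nat.iter N (nb_T b) y).
  assert (Ht : forall i, Nat.iter (i + N) (nb_T b) y = (- b) ^ i * t).
  { induction i as [|i IH]; [rewrite Nat.add_0_l, pow_O, Rmult_1_l; reflexivity|].
    specialize (HN (i + N)%nat ltac:(lia)). unfold nb_digit in HN.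
    rewrite Nat.add_succ_l, Nat.iter_succ, IH in *. unfold nb_T. rewrite HN. simpl. ring. }
  destruct (Req_dec t 0) as [|Hne]; [exact H|exfalso].
  assert (Hat : 0 < Rabs t) by (apply Rabs_pos_lt; exact Hne).
  destruct (Pow_x_infinity (- b) ltac:(rewrite Rabs_left; lra) (2 / Rabs t)) as [i Hi].
  specialize (Hi i (Nat.le_refl i)).
  pose proof (iter_nb_T_bounded y (i + N) Hk) as Hbd. rewrite Ht in Hbd.
  assert (Rabs ((- b) ^ i * t) <= 1) by (apply Rabs_le; lra).
  rewrite Rabs_mult in H.
  assert (2 / Rabs t * Rabs t = 2) by (field; lra).
  nra.
Qed.

End NegBetaTransformation.

(** * The rings Z[b] and Z[b, 1/b] *)

(* Since [b] is a root of a monic cubic, [Z[b]] is the set of [zbeta b a c d]. *)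
Definition zbeta (b : R) (a c d : Z) : R := IZR a + IZR c * b + IZR d * b ^ 2.

Definition in_Zbeta (b w : R) : Prop := exists a c d : Z, w = zbeta b a c d.

Definition in_Zbeta_inv (b x : R) : Prop := exists k : nat, in_Zbeta b (x * b ^ k).

Section Zbeta.

Variables (M N : Z) (b : R).
Hypothesis b_root : b ^ 3 = IZR M * b ^ 2 + IZR M * b + IZR N.

Lemma in_Zbeta_IZR z : in_Zbeta b (IZR z).
Proof. exists z, 0%Z, 0%Z. unfold zbeta. ring. Qed.

Lemma in_Zbeta_self : in_Zbeta b b.
Proof. exists 0%Z, 1%Z, 0%Z. unfold zbeta. ring. Qed.

Lemma in_Zbeta_add x y : in_Zbeta b x -> in_Zbeta b y -> in_Zbeta b (x + y).
Proof.
  intros (a1 & c1 & d1 & ->) (a2 & c2 & d2 & ->).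
  exists (a1 + a2)%Z, (c1 + c2)%Z, (d1 + d2)%Z. unfold zbeta. rewrite !plus_IZR. ring.
Qed.

Lemma in_Zbeta_opp x : in_Zbeta b x -> in_Zbeta b (- x).
Proof.
  intros (a & c & d & ->). exists (- a)%Z, (- c)%Z, (- d)%Z. unfold zbeta. rewrite !opp_IZR. ring.
Qed.

Lemma in_Zbeta_mul x y : in_Zbeta b x -> in_Zbeta b y -> in_Zbeta b (x * y).
Proof.
  intros (a1 & c1 & d1 & ->) (a2 & c2 & d2 & ->).
  set (p := (c1 * d2 + d1 * c2)%Z). set (q := (d1 * d2)%Z).
  exists (a1 * a2 + q * M * N + p * N)%Z,
         (a1 * c2 + c1 * a2 + q * M * M + q * N + p * M)%Z,
         (a1 * d2 + c1 * c2 + d1 * a2 + q * M * M + q * M + p * M)%Z.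
  unfold zbeta. apply Rminus_diag_uniq.
  transitivity ((IZR q * b + IZR p + IZR q * IZR M) * (b ^ 3 - IZR M * b ^ 2 - IZR M * b - IZR N)).
  - unfold p, q. push_IZR. ring.
  - rewrite b_root. ring.
Qed.

Lemma in_Zbeta_pow k : in_Zbeta b (b ^ k).
Proof.
  induction k as [|k IH]; simpl; [exact (in_Zbeta_IZR 1)|].
  apply in_Zbeta_mul; [apply in_Zbeta_self | exact IH].
Qed.

Lemma in_Zbeta_inv_of_in_Zbeta x : in_Zbeta b x -> in_Zbeta_inv b x.
Proof. intros H. exists 0%nat. rewrite pow_O, Rmult_1_r. exact H. Qed.

Lemma in_Zbeta_mul_pow_add x k j : in_Zbeta b (x * b ^ k) -> in_Zbeta b (x * b ^ (k + j)).
Proof.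
  intros H. rewrite pow_add, <- Rmult_assoc. apply in_Zbeta_mul; [exact H | apply in_Zbeta_pow].
Qed.

Lemma in_Zbeta_inv_add x y : in_Zbeta_inv b x -> in_Zbeta_inv b y -> in_Zbeta_inv b (x + y).
Proof.
  intros [k1 H1] [k2 H2]. exists (k1 + k2)%nat. rewrite Rmult_plus_distr_r.
  apply in_Zbeta_add; [|rewrite Nat.add_comm]; apply in_Zbeta_mul_pow_add; assumption.
Qed.

Lemma in_Zbeta_inv_opp x : in_Zbeta_inv b x -> in_Zbeta_inv b (- x).
Proof.
  intros [k H]. exists k. rewrite Ropp_mult_distr_l_reverse. apply in_Zbeta_opp, H.
Qed.

Lemma in_Zbeta_inv_mul x y : in_Zbeta_inv b x -> in_Zbeta_inv b y -> in_Zbeta_inv b (x * y).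
Proof.
  intros [k1 H1] [k2 H2]. exists (k1 + k2)%nat.
  replace (x * y * b ^ (k1 + k2)) with ((x * b ^ k1) * (y * b ^ k2)) by (rewrite pow_add; ring).
  apply in_Zbeta_mul; assumption.
Qed.

Lemma in_Zbeta_inv_div x : b <> 0 -> in_Zbeta_inv b x -> in_Zbeta_inv b (x / b).
Proof.
  intros Hb [k H]. exists (S k). replace (x / b * b ^ S k) with (x * b ^ k) by (simpl; field; exact Hb).
  exact H.
Qed.

Lemma in_Zbeta_inv_pow x k : in_Zbeta_inv b x -> in_Zbeta_inv b (x ^ k).
Proof.
  intros Hx. induction k as [|k IH]; simpl.
  - apply in_Zbeta_inv_of_in_Zbeta, (in_Zbeta_IZR 1).
  - apply in_Zbeta_inv_mul; assumption.
Qed.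

Lemma in_Zbeta_inv_div_opp_pow x k : b <> 0 -> in_Zbeta_inv b x -> in_Zbeta_inv b (x / (- b) ^ k).
Proof.
  intros Hb Hx. induction k as [|k IH].
  - rewrite pow_O, Rdiv_1_r. exact Hx.
  - replace (x / (- b) ^ S k) with (- (x / (- b) ^ k / b))
      by (simpl; field; split; [apply pow_nonzero|]; lra).
    apply in_Zbeta_inv_opp, in_Zbeta_inv_div; assumption.
Qed.

Lemma nb_T_zbeta a c d :
  nb_T b (zbeta b a c d) =
  zbeta b (- d * N - floorR (- b * zbeta b a c d - nb_ell b)) (- a - d * M) (- c - d * M).
Proof.
  unfold nb_T at 1. set (e := floorR _). unfold zbeta. push_IZR.
  apply Rminus_diag_uniq.
  transitivity (- IZR d * (b ^ 3 - IZR M * b ^ 2 - IZR M * b - IZR N)); [ring|].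
  rewrite b_root. ring.
Qed.

Lemma in_Zbeta_iter_nb_T q y : in_Zbeta b (y * b ^ q) -> in_Zbeta b (Nat.iter q (nb_T b) y).
Proof.
  revert y. induction q as [|q IH]; intros y Hy.
  - rewrite pow_O, Rmult_1_r in Hy. exact Hy.
  - rewrite Nat.iter_succ_r. apply IH. unfold nb_T. set (e := floorR _).
    replace ((- b * y - IZR e) * b ^ q) with (- (y * b ^ S q) + - (IZR e * b ^ q))
      by (simpl; ring).
    apply in_Zbeta_add; apply in_Zbeta_opp; [exact Hy|].
    apply in_Zbeta_mul; [apply in_Zbeta_IZR | apply in_Zbeta_pow].
Qed.

Lemma in_Zbeta_inv_of_nb_T w : b <> 0 -> in_Zbeta_inv b (nb_T b w) -> in_Zbeta_inv b w.
Proof.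
  intros Hb HT. unfold nb_T in HT. set (e := floorR _) in HT.
  replace w with (- (- b * w - IZR e + IZR e) / b) by (field; exact Hb).
  apply in_Zbeta_inv_div; [exact Hb|]. apply in_Zbeta_inv_opp, in_Zbeta_inv_add; [exact HT|].
  apply in_Zbeta_inv_of_in_Zbeta, in_Zbeta_IZR.
Qed.

Lemma in_Zbeta_inv_of_orbit_0 N0 w : b <> 0 -> Nat.iter N0 (nb_T b) w = 0 -> in_Zbeta_inv b w.
Proof.
  intros Hb. revert w. induction N0 as [|N0 IH]; intros w Hw.
  - simpl in Hw. rewrite Hw. apply in_Zbeta_inv_of_in_Zbeta, (in_Zbeta_IZR 0).
  - rewrite Nat.iter_succ_r in Hw. apply in_Zbeta_inv_of_nb_T; [exact Hb|]. exact (IH _ Hw).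
Qed.

Lemma in_Fin_in_Zbeta_inv x : 1 < b -> in_Fin b x -> in_Zbeta_inv b x.
Proof.
  intros Hb Hx. destruct (in_Fin_orbit_0 b Hb x Hx) as (k & N0 & HN0).
  replace x with (x / (- b) ^ k * (- b) ^ k) by (field; apply pow_nonzero; lra).
  apply in_Zbeta_inv_mul.
  - apply (in_Zbeta_inv_of_orbit_0 N0); [lra | exact HN0].
  - apply in_Zbeta_inv_pow, in_Zbeta_inv_opp, in_Zbeta_inv_of_in_Zbeta, in_Zbeta_self.
Qed.

End Zbeta.

(** * The case n < m *)

Section CubicRoot.

Variables (M N : Z) (b : R).
Hypotheses (N_ge_1 : (1 <= N)%Z) (N_le_M : (N <= M)%Z) (b_gt_1 : 1 < b)
  (b_root : b ^ 3 = IZR M * b ^ 2 + IZR M * b + IZR N).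

Lemma cubic_root_bounds : IZR M < b < IZR M + 1.
Proof.
  apply IZR_le in N_ge_1, N_le_M.
  assert (0 < b ^ 2) by nra.
  split; nra.
Qed.

Section NonRing.

Hypothesis N_lt_M : (N < M)%Z.

Lemma cubic_root_gt_2 : 2 < b.
Proof.
  pose proof cubic_root_bounds. assert (2 <= IZR M) by (apply IZR_le; lia). lra.
Qed.

Lemma one_in_Fin : in_Fin b 1.
Proof.
  pose proof cubic_root_gt_2. destruct (inv_succ_bounds b b_gt_1) as [[Hv0 Hv2] Hv].
  assert (Hu : / b * b = 1) by (field; lra).
  assert (Hu0 : 0 < / b) by (apply Rinv_0_lt_compat; lra).
  assert (Hk : 1 / (- b) ^ 1 = - / b) by (simpl; field; lra).
  apply (in_Fin_intro b b_gt_1 1 1 1).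
  - unfold nb_in_interval. rewrite Hk, nb_ell_eq by exact b_gt_1. nra.
  - intros j Hj. replace j with 0%nat by lia. unfold nb_in_interval.
    rewrite pow_O, Rdiv_1_r, nb_ell_eq by exact b_gt_1. lra.
  - rewrite Hk. simpl. rewrite (nb_T_eq b (- / b) 1); [field; lra|].
    rewrite nb_ell_eq by exact b_gt_1. nra.
Qed.

Lemma neg_inv_sq_orbit_prefix :
  Nat.iter 3 (nb_T b) (- / b ^ 2) = - IZR (N + 1) / (b + 1).
Proof.
  pose proof cubic_root_bounds. pose proof cubic_root_gt_2.
  destruct (inv_succ_bounds b b_gt_1) as [[Hv0 Hv2] Hv].
  assert (Hvu : / (b + 1) < / b) by (apply Rinv_lt_contravar; nra).
  assert (Hu : / b < 1 / 2) by (apply (Rmult_lt_reg_r b); [lra|]; rewrite Rinv_l; lra).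
  assert (HNM : IZR N + 1 <= IZR M) by (rewrite <- plus_IZR; apply IZR_le; lia).
  apply IZR_le in N_ge_1.
  assert (E1 : nb_T b (- / b ^ 2) = / b - 1).
  { rewrite (nb_T_eq b _ 1); [field; lra|].
    replace (- b * - / b ^ 2) with (/ b) by (field; lra).
    rewrite nb_ell_eq by exact b_gt_1. lra. }
  assert (HbM : 2 < (b - IZR M) * b).
  { assert ((b - IZR M) * b ^ 2 = IZR M * b + IZR N) by nra. nra. }
  assert (E2 : nb_T b (/ b - 1) = b - 1 - IZR M).
  { rewrite (nb_T_eq b _ M); [field; lra|].
    replace (- b * (/ b - 1)) with (b - 1) by (field; lra).
    rewrite nb_ell_eq by exact b_gt_1. nra. }
  assert (Hid : - b * (b - 1 - IZR M) - 1 = - IZR (N + 1) * / (b + 1)).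
  { apply (Rmult_eq_reg_r (b + 1)); [|lra]. rewrite Rmult_assoc, Rinv_l by lra.
    push_IZR. apply Rminus_diag_uniq.
    transitivity (- (b ^ 3 - IZR M * b ^ 2 - IZR M * b - IZR N)); [ring|].
    rewrite b_root. ring. }
  assert (E3 : nb_T b (b - 1 - IZR M) = - IZR (N + 1) / (b + 1)).
  { rewrite (nb_T_eq b _ 1); [unfold Rdiv; rewrite <- Hid; ring|].
    rewrite nb_ell_eq by exact b_gt_1.
    replace (- b * (b - 1 - IZR M) - (/ (b + 1) - 1)) with (2 - IZR (N + 2) * / (b + 1))
      by (rewrite !plus_IZR in *; lra).
    push_IZR. nra. }
  rewrite !Nat.iter_succ_r, E1, E2, E3. reflexivity.
Qed.

(* The expansion of [-1] is [1 M 1 • (N+1)(N+1)...], which never terminates. *)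
Lemma neg_one_notin_Fin : ~ in_Fin b (-1).
Proof.
  pose proof cubic_root_bounds. pose proof cubic_root_gt_2.
  destruct (inv_succ_bounds b b_gt_1) as [[Hv0 Hv2] Hv].
  assert (Hvu : / (b + 1) < / b) by (apply Rinv_lt_contravar; nra).
  assert (Hu : / b < 1 / 2) by (apply (Rmult_lt_reg_r b); [lra|]; rewrite Rinv_l; lra).
  assert (Hfix : 0 <= IZR (N + 1) <= b).
  { split; [apply IZR_le; lia|]. assert (IZR (N + 1) <= IZR M) by (apply IZR_le; lia). lra. }
  assert (Hk2 : -1 / (- b) ^ 2 = - / b ^ 2) by (field; lra).
  assert (Hin2 : nb_in_interval b (- / b ^ 2)).
  { unfold nb_in_interval. rewrite nb_ell_eq by exact b_gt_1.
    replace (/ b ^ 2) with (/ b * / b) by (field; lra). nra. }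
  intros (k & Hk & Hleast & N0 & HN0).
  assert (k = 2%nat) as ->.
  { destruct (Nat.lt_total k 2) as [Hlt|[Heq|Hgt]]; [exfalso| exact Heq |].
    - unfold nb_in_interval in Hk. rewrite nb_ell_eq in Hk by exact b_gt_1.
      destruct k as [|[|k]]; [| |lia].
      + rewrite pow_O, Rdiv_1_r in Hk. lra.
      + replace (-1 / (- b) ^ 1) with (/ b) in Hk by (field; lra). lra.
    - exfalso. apply (Hleast 2%nat Hgt). rewrite Hk2. exact Hin2. }
  specialize (HN0 (N0 + 3)%nat ltac:(lia)).
  unfold nb_digit in HN0. rewrite Hk2, Nat.iter_add, neg_inv_sq_orbit_prefix,
    iter_nb_T_fixed, nb_floor_fixed in HN0 by assumption.
  lia.
Qed.

End NonRing.
End CubicRoot.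

(** * A potential on Z × Z *)

Definition hex_norm (x y : Z) : Z := Z.max (Z.abs x) (Z.max (Z.abs y) (Z.abs (y - x))).

(* The position of [(x, y)] on the boundary of the hexagon of radius [h = hex_norm x y]:
   vertices get even and open edges odd numbers, clockwise from [(0, h)]. A step of
   [hex_step] either shrinks the hexagon or moves strictly forward in this order. *)
Definition hex_phase (x y : Z) : Z :=
  let h := hex_norm x y in
  if Z.eqb y h then (if Z.eqb (y - x) h then 0 else if Z.eqb x h then 2 else 1)
  else if Z.eqb x h then (if Z.eqb (y - x) (- h) then 4 else 3)
  else if Z.eqb (y - x) (- h) then (if Z.eqb y (- h) then 6 else 5)
  else if Z.eqb y (- h) then (if Z.eqb x (- h) then 8 else 7)
  else if Z.eqb x (- h) then (if Z.eqb (y - x) h then 10 else 9)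
  else 11.

Definition hex_potential (x y : Z) : Z := 12 * hex_norm x y + 11 - hex_phase x y.

Lemma hex_phase_range x y : (0 <= hex_phase x y <= 11)%Z.
Proof.
  unfold hex_phase.
  repeat match goal with |- context [Z.eqb ?a ?b] => destruct (Z.eqb a b) end; lia.
Qed.

Lemma hex_potential_nonneg x y : (0 <= hex_potential x y)%Z.
Proof.
  unfold hex_potential, hex_norm. pose proof (hex_phase_range x y). lia.
Qed.

(* Opaque to lia, which would otherwise case-split on every such hypothesis. *)
Definition guarded (A B : Prop) : Prop := A -> B.

Lemma hex_potential_decreases (x y z h : Z) :
  h = hex_norm x y -> (1 <= h)%Z ->
  (- h <= z <= h)%Z -> (- h <= z - y <= h)%Z ->
  (x = h -> y = h -> z < h)%Z ->
  (x = - h -> y = - h -> - h < z)%Z ->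
  (x = - h -> y <= 0 -> z - y + x <= 0)%Z ->
  (x = - h -> y = 0 -> z - y + x <= -1)%Z ->
  (x = - h -> y <= 0 -> - h <= z - y + x)%Z ->
  (y = x + h -> x <= -1 -> z - y + x <= -1 /\ x - h < z - y + x)%Z ->
  (x = h -> 0 <= y -> z - y + x <= h)%Z ->
  (hex_potential y z < hex_potential x y)%Z.
Proof.
  intros Eh0 Hh1 [Hz1 Hz2] [Hzy1 Hzy2] Htop Hbot Hleft Hleft0 Hleft' Hupper Hright.
  repeat match goal with H : ?A -> ?B -> ?C |- _ => change (guarded A (guarded B C)) in H end.
  assert (Hx : (- h <= x <= h)%Z) by (rewrite Eh0; unfold hex_norm; lia).
  assert (Hy : (- h <= y <= h)%Z) by (rewrite Eh0; unfold hex_norm; lia).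
  assert (Hxy : (- h <= y - x <= h)%Z) by (rewrite Eh0; unfold hex_norm; lia).
  unfold hex_potential. rewrite <- Eh0.
  assert (Hle : (hex_norm y z <= h)%Z) by (unfold hex_norm; lia).
  pose proof (hex_phase_range x y). pose proof (hex_phase_range y z).
  destruct (Z.eq_dec (hex_norm y z) h) as [Eh|]; [rewrite Eh|lia].
  enough (hex_phase x y < hex_phase y z)%Z by lia.
  assert (Hbd : (x = h \/ x = - h \/ y = h \/ y = - h \/ y - x = h \/ y - x = - h)%Z)
    by (rewrite Eh0; unfold hex_norm; lia).
  assert (Hbd' : (y = h \/ y = - h \/ z = h \/ z = - h \/ z - y = h \/ z - y = - h)%Z)
    by (rewrite <- Eh; unfold hex_norm; lia).
  unfold hex_phase. rewrite Eh, <- Eh0. clear Eh Hle Eh0.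
  repeat match goal with |- context [Z.eqb ?a ?b] => destruct (Z.eqb_spec a b) end;
  repeat match goal with H : guarded _ _ |- _ => first [specialize (H ltac:(lia)) | clear H] end;
  repeat match goal with H : _ /\ _ |- _ => destruct H end;
  lia.
Qed.

Lemma scaled_diff_le (a b X Y h : R) : 0 <= a <= 1 -> 0 <= b <= 1 ->
  - h <= X <= h -> - h <= Y <= h -> - h <= Y - X <= h -> a * Y - b * X <= h.
Proof.
  intros Ha Hb HX HY HXY.
  destruct (Rle_lt_dec 0 X); destruct (Rle_lt_dec 0 Y); nra.
Qed.

Lemma subconvex_comb_le (a b X Y h : R) : 0 <= a -> 0 <= b -> a + b <= 1 ->
  - h <= X <= h -> - h <= Y <= h -> a * X + b * Y <= h.
Proof. intros Ha Hb Hab HX HY. nra. Qed.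

Lemma hexagon_bounds_IZR (x y h : Z) :
  (1 <= h /\ - h <= x <= h /\ - h <= y <= h /\ - h <= y - x <= h)%Z ->
  1 <= IZR h /\ - IZR h <= IZR x <= IZR h /\ - IZR h <= IZR y <= IZR h /\
  - IZR h <= IZR y - IZR x <= IZR h.
Proof.
  intros (H1 & [Hx1 Hx2] & [Hy1 Hy2] & [Hxy1 Hxy2]).
  apply IZR_le in H1, Hx1, Hx2, Hy1, Hy2, Hxy1, Hxy2.
  rewrite opp_IZR, ?minus_IZR in *. lra.
Qed.

Section HexagonStep.

Variables r0 r1 g : R.
Hypotheses (r0_pos : 0 < r0) (r0_lt_r1 : r0 < r1) (r1_lt_1 : r1 < 1)
  (r1_r0_lt : r1 - r0 < 1 - g) (r0_lt_g : r0 < g) (g_gt_half : 1 / 2 < g).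

Section Step.

Variables x y z h : Z.
Hypotheses (window : 0 <= IZR z - r1 * IZR y + r0 * IZR x + g < 1)
  (in_hex : (1 <= h /\ - h <= x <= h /\ - h <= y <= h /\ - h <= y - x <= h)%Z).

Lemma hex_step_next_in_hexagon : (- h <= z <= h)%Z /\ (- h <= z - y <= h)%Z.
Proof.
  destruct (hexagon_bounds_IZR _ _ _ in_hex) as (h_ge_1 & hex_x & hex_y & hex_xy).
  assert (r1 * IZR y - r0 * IZR x <= IZR h) by (apply scaled_diff_le; lra).
  assert (r1 * - IZR y - r0 * - IZR x <= IZR h) by (apply scaled_diff_le; lra).
  assert (r0 * IZR x + (1 - r1) * IZR y <= IZR h) by (apply subconvex_comb_le; lra).
  assert (r0 * - IZR x + (1 - r1) * - IZR y <= IZR h) by (apply subconvex_comb_le; lra).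
  split; split; apply Zle_of_IZR_lt_succ; rewrite ?minus_IZR, ?opp_IZR; lra.
Qed.

Lemma hex_step_vertices :
  (x = h -> y = h -> z < h)%Z /\ (x = - h -> y = - h -> - h < z)%Z.
Proof.
  destruct (hexagon_bounds_IZR _ _ _ in_hex) as (h_ge_1 & hex_x & hex_y & hex_xy).
  assert (0 <= (1 - r1 + r0) * (IZR h - 1)) by (apply Rmult_le_pos; lra).
  split; intros -> ->; apply lt_IZR; rewrite ?opp_IZR in *; lra.
Qed.

Lemma hex_step_left_edge :
  (x = - h -> y <= 0 -> - h <= z - y + x <= 0)%Z /\ (x = - h -> y = 0 -> z - y + x <= -1)%Z.
Proof.
  destruct (hexagon_bounds_IZR _ _ _ in_hex) as (h_ge_1 & hex_x & hex_y & hex_xy).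
  split; intros -> Hy.
  - apply IZR_le in Hy.
    assert (0 <= (1 - r1) * - IZR y) by (apply Rmult_le_pos; lra).
    assert (0 <= r0 * IZR h) by (apply Rmult_le_pos; lra).
    rewrite opp_IZR in *.
    split; apply Zle_of_IZR_lt_succ; rewrite ?plus_IZR, ?minus_IZR, ?opp_IZR; nra.
  - subst y. assert (0 <= (1 - r0) * (IZR h - 1)) by (apply Rmult_le_pos; lra).
    apply Zle_of_IZR_lt_succ. rewrite plus_IZR, minus_IZR, opp_IZR in *. simpl in *. nra.
Qed.

Lemma hex_step_upper_edges :
  (y = x + h -> x <= -1 -> z - y + x <= -1 /\ x - h < z - y + x)%Z /\
  (x = h -> 0 <= y -> z - y + x <= h)%Z.
Proof.
  destruct (hexagon_bounds_IZR _ _ _ in_hex) as (h_ge_1 & hex_x & hex_y & hex_xy).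
  split.
  - intros -> Hx. apply IZR_le in Hx. rewrite plus_IZR in *.
    assert (0 <= (r1 - r0) * (- 1 - IZR x)) by (apply Rmult_le_pos; lra).
    assert (0 <= (1 - r1) * (IZR h - 1)) by (apply Rmult_le_pos; lra).
    assert (0 <= r1 * (IZR h - 1)) by (apply Rmult_le_pos; lra).
    assert (0 <= (1 - r1 + r0) * (- 1 - IZR x)) by (apply Rmult_le_pos; lra).
    split; [apply Zle_of_IZR_lt_succ | apply lt_IZR]; push_IZR; lra.
  - intros -> Hy. apply IZR_le in Hy.
    assert (0 <= (1 - r1) * IZR y) by (apply Rmult_le_pos; lra).
    assert (0 <= r0 * IZR h) by (apply Rmult_le_pos; lra).
    apply Zle_of_IZR_lt_succ. rewrite plus_IZR, minus_IZR. lra.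
Qed.

End Step.

Lemma hex_step (x y z : Z) :
  0 <= IZR z - r1 * IZR y + r0 * IZR x + g < 1 -> (x <> 0 \/ y <> 0)%Z ->
  (hex_potential y z < hex_potential x y)%Z.
Proof.
  intros window Hnz.
  set (h := hex_norm x y).
  assert (in_hex : (1 <= h /\ - h <= x <= h /\ - h <= y <= h /\ - h <= y - x <= h)%Z)
    by (unfold h, hex_norm; lia).
  destruct (hex_step_next_in_hexagon x y z h window in_hex) as [Hz Hzy].
  destruct (hex_step_vertices x y z h window in_hex) as [Htop Hbot].
  destruct (hex_step_left_edge x y z h window in_hex) as [Hleft Hleft0].
  destruct (hex_step_upper_edges x y z h window in_hex) as [Hupper Hright].
  apply (hex_potential_decreases x y z h); auto; try lia.
Qed.

End HexagonStep.

(** * The case n = m *)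

Section RingCase.

Variables (M : Z) (b : R).
Hypotheses (M_ge_1 : (1 <= M)%Z) (b_gt_1 : 1 < b)
  (b_root : b ^ 3 = IZR M * b ^ 2 + IZR M * b + IZR M).

(* In the coordinates [(d, - c - M d)] of [zbeta b a c d], [nb_T] acts as the shift
   [(x, y) |-> (y, z)] with [z = a + M x - M y]; the window condition of the next point
   is the one of [hex_step] for [r0 = M / b], [r1 = b - M] and [g = - nb_ell b]. *)
Lemma nb_window_hex_potential (a c d : Z) :
  nb_ell b <= zbeta b a c d < nb_ell b + 1 -> (d <> 0 \/ - c - M * d <> 0)%Z ->
  (hex_potential (- c - M * d) (a + M * d - M * (- c - M * d)) <
   hex_potential d (- c - M * d))%Z.
Proof.
  intros Hw Hnz.
  destruct (cubic_root_bounds M M b M_ge_1 (Z.le_refl M) b_gt_1 b_root) as [HbM HbM1].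
  destruct (inv_succ_bounds b b_gt_1) as [[Hv0 Hv2] Hv].
  apply IZR_le in M_ge_1.
  set (m := IZR M) in *. set (v := / (b + 1)) in *.
  set (r0 := b ^ 2 - m * b - m). set (r1 := b - m).
  assert (Hr0b : r0 * b = m) by (unfold r0; nra).
  assert (Hr0 : 0 < r0) by nra.
  assert (Hr01 : (r1 - r0) * b = r0) by (unfold r1, r0; nra).
  assert (Hr1v : (r1 - r0) * (b + 1) = r1) by nra.
  assert (Hr1 : r1 < 1) by (unfold r1; lra).
  assert (Hr01' : r0 < r1) by nra.
  assert (Hgap : r1 - r0 < 1 - (1 - v)) by nra.
  assert (Hr0g : r0 < 1 - v) by (unfold r1 in *; nra).
  apply (hex_step r0 r1 (1 - v)); try (assumption || lra).
  replace (IZR (a + M * d - M * (- c - M * d)) - r1 * IZR (- c - M * d) + r0 * IZR d + (1 - v))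
    with (zbeta b a c d - nb_ell b)
    by (rewrite nb_ell_eq by exact b_gt_1; unfold zbeta, r0, r1, m, v; push_IZR; ring).
  lra.
Qed.

Lemma orbit_reaches_0 (a c d : Z) :
  nb_ell b <= zbeta b a c d < nb_ell b + 1 ->
  exists N, Nat.iter N (nb_T b) (zbeta b a c d) = 0.
Proof.
  remember (Z.to_nat (hex_potential d (- c - M * d))) as p eqn:Hp.
  revert a c d Hp. induction p as [p IH] using lt_wf_ind. intros a c d Hp Hw.
  assert (Hcases : ((d = 0 /\ c = 0) \/ (d <> 0 \/ - c - M * d <> 0))%Z) by lia.
  destruct Hcases as [[-> ->] | Hnz].
  - exists 0%nat. assert (Ha : zbeta b a 0 0 = IZR a) by (unfold zbeta; simpl; ring).
    rewrite Ha in Hw |- *. rewrite (IZR_in_window_eq_0 b b_gt_1 a Hw). reflexivity.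
  - pose proof (nb_window_hex_potential a c d Hw Hnz) as Hdec.
    pose proof (hex_potential_nonneg (- c - M * d) (a + M * d - M * (- c - M * d))).
    pose proof (nb_T_range b (zbeta b a c d)) as Hw'.
    rewrite (nb_T_zbeta M M b b_root) in Hw'.
    assert (Hlt : (Z.to_nat (hex_potential (- c - d * M) (- (- a - d * M) - M * (- c - d * M)))
                   < p)%nat).
    { replace (- (- a - d * M) - M * (- c - d * M))%Z with (a + M * d - M * (- c - M * d))%Z
        by ring.
      replace (- c - d * M)%Z with (- c - M * d)%Z by ring. lia. }
    destruct (IH _ Hlt _ _ _ eq_refl Hw') as [N HN].
    exists (S N). rewrite Nat.iter_succ_r, (nb_T_zbeta M M b b_root). exact HN.
Qed.

Lemma in_Zbeta_inv_in_Fin x : in_Zbeta_inv b x -> in_Fin b x.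
Proof.
  intros Hx. apply (in_Fin_of_orbits_0 b b_gt_1). intros k Hk.
  set (y := x / (- b) ^ k) in *.
  destruct (in_Zbeta_inv_div_opp_pow b x k ltac:(lra) Hx) as [q Hq].
  destruct (in_Zbeta_iter_nb_T M M b b_root q y Hq) as (a & c & d & Hw).
  assert (Hwin : nb_ell b <= zbeta b a c d < nb_ell b + 1).
  { rewrite <- Hw. destruct q as [|q]; [unfold nb_in_interval in Hk; simpl; lra|].
    apply nb_T_range. }
  destruct (orbit_reaches_0 a c d Hwin) as [N HN].
  exists (N + q)%nat. rewrite Nat.iter_add, Hw. exact HN.
Qed.

Lemma Fin_is_ring_of_cubic : Fin_is_ring b.
Proof.
  assert (Hsub : forall x, in_Fin b x -> in_Zbeta_inv b x)
    by (intros x; apply (in_Fin_in_Zbeta_inv M M b b_root x b_gt_1)).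
  split; [|split].
  - intros x y Hx Hy. apply in_Zbeta_inv_in_Fin, (in_Zbeta_inv_add M M b b_root); auto.
  - intros x Hx. apply in_Zbeta_inv_in_Fin, in_Zbeta_inv_opp; auto.
  - intros x y Hx Hy. apply in_Zbeta_inv_in_Fin, (in_Zbeta_inv_mul M M b b_root); auto.
Qed.

End RingCase.

Theorem theorem3 (m n : nat) (beta : R) :
  (1 <= n)%nat -> (n <= m)%nat ->
  1 < beta ->
  beta ^ 3 - INR m * beta ^ 2 - INR m * beta - INR n = 0 ->
  (Fin_is_ring beta <-> n = m).
Proof.
  intros Hn Hnm Hb Hroot.
  rewrite !INR_IZR_INZ in Hroot.
  assert (Hroot' : beta ^ 3 = IZR (Z.of_nat m) * beta ^ 2 + IZR (Z.of_nat m) * beta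
                              + IZR (Z.of_nat n)) by lra.
  split.
  - intros (_ & Hopp & _). destruct (Nat.eq_dec n m) as [|Hne]; [assumption|exfalso].
    apply (neg_one_notin_Fin (Z.of_nat m) (Z.of_nat n) beta); try lia; try assumption.
    apply Hopp, (one_in_Fin (Z.of_nat m) (Z.of_nat n)); try lia; assumption.
  - intros ->. apply (Fin_is_ring_of_cubic (Z.of_nat m)); [lia | assumption | exact Hroot'].
Qed.
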